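(* Let $R\subseteq\mathbb N$ be sparse and $A$ an operator on $R$. If $A>_R0$ then there is $r\in\mathbb Q_{>1}$ such that $A(\sigma z)>r\,Az$ for all but finitely many $z\in R$; if $A<_R0$ then there is $r\in\mathbb Q_{>1}$ such that $A(\sigma z)<r\,Az$ for all but finitely many $z\in R$. In particular, if $A>_R0$ (resp. $A<_R0$) the map $z\mapsto Az$ on $R$ is eventually strictly increasing (resp. strictly decreasing).
   Context: Let $R\subseteq\mathbb N$ be infinite, enumerated increasingly as $(r_n)_{n\in\mathbb N}$; $\sigma:R\to R$ is the successor map $\sigma(r_n)=r_{n+1}$ and $\sigma^k$ its $k$-fold iterate ($\sigma^0=\mathrm{id}$). An operator on $R$ is a function $R\to\mathbb Z$, $z\mapsto a_m\sigma^m(z)+\dots+a_0\sigma^0(z)$ with $a_i\in\mathbb Z$. For an operator $A$: $A=_R0$ if $Az=0$ for all $z\in R$; $A>_R0$ (resp. $A<_R0$) if $Az>0$ (resp. $Az<0$) for all but finitely many $z\in R$. $R$ is sparse if every operator $A$ satisfies (S1) $A=_R0$ or $A>_R0$ or $A<_R0$; and (S2) if $A>_R0$ then there is $\Delta\in\mathbb N$ with $A(\sigma^\Delta z)>z$ for all $z\in R$. *)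

From mathcomp Require Import all_boot all_order all_algebra.
Set Implicit Arguments. Unset Strict Implicit. Unset Printing Implicit Defensive.
Import Order.TTheory GRing.Theory Num.Theory.
Local Open Scope ring_scope.

(* An infinite set R ⊆ ℕ is represented by its increasing enumeration
   r : nat -> nat (r n = r_n, strictly increasing); R = range r.
   The successor map is σ(r_n) = r_(n+1), so σ^k(r_n) = r_(n+k).
   An operator z ↦ a_m σ^m(z) + ... + a_0 σ^0(z) is represented by the
   coefficient list a = [:: a_0; a_1; ...; a_m] : seq int.
   op_val r a n is the value A z at z = r_n. *)

Definition strictly_incr (r : nat -> nat) : Prop := forall n, (r n < r n.+1)%N.

Definition op_val (r : nat -> nat) (a : seq int) (n : nat) : int :=
  \sum_(i < size a) a`_i * ((r (n + i)%N)%:Z).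

Definition op_zero (r : nat -> nat) (a : seq int) : Prop :=
  forall n, op_val r a n = 0.

Definition op_pos (r : nat -> nat) (a : seq int) : Prop :=
  exists N, forall n, (N <= n)%N -> 0 < op_val r a n.

Definition op_neg (r : nat -> nat) (a : seq int) : Prop :=
  exists N, forall n, (N <= n)%N -> op_val r a n < 0.

Definition sparse (r : nat -> nat) : Prop :=
  forall a : seq int,
    (op_zero r a \/ op_pos r a \/ op_neg r a) /\
    (op_pos r a -> exists D : nat, forall n, (r n)%:Z < op_val r a (n + D)%N).

From mathcomp Require Import all_boot all_order all_algebra.
From mathcomp Require Import zify ring.
Import Order.TTheory GRing.Theory Num.Theory.
Local Open Scope ring_scope.

(* Let A >_R 0.  Applying (S1) and (S2) to the difference operator sigma A - A
   shows that the increments A(sigma^(D+1) z) - A(sigma^D z) eventually exceed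
   z, so A grows at least as fast as R itself, while trivially
   A z <= M sigma^m z.  Now apply (S1) to k sigma A - (k+1) A with
   k = M 2^(m+D): if it were eventually negative, A would grow by a factor at
   most ((k+1)/k)^(m+D) <= 2^(m+D) over m+D steps, too slowly to keep up with
   the increments.  Hence k A(sigma z) >= (k+1) A z eventually (strictly, after
   doubling k in the degenerate case), and r = (k+1)/k works.  The case
   A <_R 0 follows by applying this to -A. *)

Lemma op_val_widen r a n K : (size a <= K)%N ->
  op_val r a n = \sum_(i < K) a`_i * (r (n + i)%N)%:Z.
Proof.
move=> leaK; rewrite /op_val.
rewrite (big_ord_widen K (fun i => a`_i * (r (n + i)%N)%:Z) leaK).
rewrite big_mkcond; apply: eq_bigr => i _; case: ifP => // /negbT.
by rewrite -leqNgt => ltai; rewrite nth_default // mul0r.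
Qed.

Definition op_lincomb (c : int) (s : seq int) (d : int) (t : seq int) :=
  mkseq (fun i => c * s`_i + d * t`_i) (maxn (size s) (size t)).

Lemma op_val_lincomb r c s d t n :
  op_val r (op_lincomb c s d t) n = c * op_val r s n + d * op_val r t n.
Proof.
rewrite {1}/op_val size_mkseq.
rewrite (op_val_widen r s n _ (leq_maxl (size s) (size t))).
rewrite (op_val_widen r t n _ (leq_maxr (size s) (size t))).
rewrite !mulr_sumr -big_split /=.
by apply: eq_bigr => i _; rewrite nth_mkseq //; ring.
Qed.

Lemma op_val_shift r a n : op_val r (0 :: a) n = op_val r a n.+1.
Proof.
rewrite /op_val /= big_ord_recl /= mul0r add0r.
by apply: eq_bigr => i _; rewrite /bump /= addnS.
Qed.

Lemma op_val_opp r a n : op_val r (map -%R a) n = - op_val r a n.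
Proof.
rewrite /op_val size_map -sumrN; apply: eq_bigr => i _.
by rewrite (nth_map 0) // mulNr.
Qed.

Lemma incr_from (R : numDomainType) (f : nat -> R) N :
  (forall n, (N <= n)%N -> f n < f n.+1) ->
  forall n m, (N <= n)%N -> (n < m)%N -> f n < f m.
Proof.
move=> incr n m Nn nm.
have := @homo_ltn_in R [pred i | N <= i]%N f _ lt_trans.
apply=> //; last by rewrite inE (leq_trans Nn (ltnW nm)).
- by move=> i j Ni _ k /andP[/ltnW/(leq_trans Ni)].
- by move=> i Ni _; apply: incr.
Qed.

Lemma decr_int_le (f : nat -> int) N :
  (forall n, (N <= n)%N -> f n.+1 < f n) ->
  forall n j, (N <= n)%N -> f (n + j)%N <= f n - j%:Z.
Proof.
move=> decr n j Nn; elim: j => [|j IHj]; first by rewrite addn0 subr0.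
have := decr (n + j)%N (leq_trans Nn (leq_addr _ _)); rewrite addnS; lia.
Qed.

Lemma geometric_le (R : numDomainType) (f : nat -> R) (k : R) j : 0 <= k ->
  (forall n, (j <= n)%N -> k * f n.+1 <= (k + 1) * f n) ->
  forall t, k ^+ t * f (j + t)%N <= (k + 1) ^+ t * f j.
Proof.
move=> k_ge0 step; elim=> [|t IHt]; first by rewrite !expr0 !mul1r addn0.
rewrite addnS !exprS -mulrA mulrCA.
apply: (le_trans (ler_wpM2l (exprn_ge0 t k_ge0) (step _ (leq_addr t j)))).
by rewrite mulrCA -mulrA ler_wpM2l // addr_ge0.
Qed.

(* Over L steps the ratio bound lets f grow by at most ((k+1)/k)^L <= 2^L,
   too little to keep up with its increments. *)
Lemma no_slow_growth (f g : nat -> int) (M : int) (L : nat) :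
  0 < M -> (forall n, 0 <= g n) -> (forall n, f n <= M * g n) ->
  (forall n, g n < f (n + L).+1 - f (n + L)%N) ->
  ~ exists N, forall n, (N <= n)%N ->
      M * 2 ^+ L * f n.+1 < (M * 2 ^+ L + 1) * f n.
Proof.
move=> M_gt0 g_ge0 f_le incr [N slow]; set k := M * 2 ^+ L in slow.
have k_gt0 : 0 < k by rewrite mulr_gt0 // exprn_gt0.
have kL_gt0 : 0 < k ^+ L by rewrite exprn_gt0.
have kg_lt : k * g N < f (N + L)%N.
  have kincr : k * g N < k * f (N + L).+1 - k * f (N + L)%N.
    by rewrite -mulrBr ltr_pM2l.
  have := slow (N + L)%N (leq_addr _ _); lia.
have kk_le : (k + 1) ^+ L * M <= k ^+ L * k.
  have : (k + 1) ^+ L <= (2 * k) ^+ L by apply: lerXn2r; rewrite ?nnegrE; lia.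
  rewrite exprMn => le2k; apply: (le_trans (ler_wpM2r (ltW M_gt0) le2k)).
  by have -> : 2 ^+ L * k ^+ L * M = k ^+ L * k by rewrite /k; ring.
have grow := @geometric_le _ f k N (ltW k_gt0) (fun n Nn => ltW (slow n Nn)) L.
have : k ^+ L * (k * g N) < k ^+ L * (k * g N).
  apply: (lt_le_trans (y := k ^+ L * f (N + L)%N)); first by rewrite ltr_pM2l.
  apply: (le_trans grow); apply: (le_trans (y := (k + 1) ^+ L * (M * g N))).
    by apply: ler_wpM2l (f_le N); rewrite exprn_ge0 // addr_ge0 // ltW.
  by rewrite mulrA (mulrA (k ^+ L) k); have := ler_wpM2r (g_ge0 N) kk_le.
by rewrite ltxx.
Qed.

Section SparseGrowth.

Variable r : nat -> nat.
Hypothesis r_incr : strictly_incr r.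

Lemma r_homo : {homo r : i j / (i <= j)%N}.
Proof.
apply: homo_leq => // [j i k|i]; [exact: leq_trans | exact: ltnW].
Qed.

Lemma leq_index_r n : (n <= r n)%N.
Proof. by elim: n => // n IHn; apply: leq_ltn_trans IHn (r_incr n). Qed.

Lemma op_val_le_bound a : exists2 M : int, 0 < M &
  forall n, op_val r a n <= M * (r (n + size a)%N)%:Z.
Proof.
exists (1 + \sum_(i < size a) `|a`_i|); first by rewrite ltr_pwDl // sumr_ge0.
move=> n; rewrite mulrDl mul1r; apply: ler_wpDl => //.
rewrite mulr_suml /op_val; apply: ler_sum => i _.
apply: (le_trans (ler_wpM2r _ (ler_norm _))) => //.
by apply: ler_wpM2l => //; rewrite lez_nat r_homo // leq_add2l ltnW.
Qed.

Hypothesis r_sparse : sparse r.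

Lemma op_pos_increments a : op_pos r a ->
  exists D, forall n, (r n)%:Z < op_val r a (n + D).+1 - op_val r a (n + D)%N.
Proof.
move=> [N apos]; set d := op_lincomb 1 (0 :: a) (-1) a.
have val_d n : op_val r d n = op_val r a n.+1 - op_val r a n.
  by rewrite op_val_lincomb op_val_shift mul1r mulN1r.
have [[d0|[dpos|[N' dneg]]] d_S2] := r_sparse d.
- (* A is constant, but (S2) for A makes it exceed every element of R *)
  have A_const n : op_val r a n = op_val r a 0.
    by elim: n => // n IHn; have := d0 n; rewrite val_d IHn; lia.
  have [_ /(_ (ex_intro _ N apos)) [D' big]] := r_sparse a.
  have := big `|op_val r a 0|%N; rewrite A_const.
  have := leq_index_r `|op_val r a 0|%N; lia.
- by have [D big] := d_S2 dpos; exists D => n; rewrite -val_d.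
- have decr n : (N' <= n)%N -> op_val r a n.+1 < op_val r a n.
    by move/dneg; rewrite val_d subr_lt0.
  set n := maxn N N'; set j := `|op_val r a n|%N.
  have := decr_int_le _ _ decr n j (leq_maxr N N').
  have := apos (n + j)%N (leq_trans (leq_maxl N N') (leq_addr _ _)); lia.
Qed.

Lemma op_pos_ratio a : op_pos r a -> exists2 k : int, 0 < k &
  exists N, forall n, (N <= n)%N ->
    (k + 1) * op_val r a n < k * op_val r a n.+1.
Proof.
move=> apos; have [N0 A_gt0] := apos.
have [D incr] := op_pos_increments a apos.
have [M M_gt0 A_le] := op_val_le_bound a.
set L := (size a + D)%N; set k : int := M * 2 ^+ L.
have k_gt0 : 0 < k by rewrite mulr_gt0 // exprn_gt0.
set e := op_lincomb k (0 :: a) (-(k + 1)) a.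
have val_e n : op_val r e n = k * op_val r a n.+1 - (k + 1) * op_val r a n.
  by rewrite op_val_lincomb op_val_shift mulNr.
have [[e0|[[N epos]|[N eneg]]] _] := r_sparse e.
- (* k A(sigma z) = (k+1) A z exactly, so 2k satisfies the strict inequality *)
  exists (2 * k); first by rewrite mulr_gt0.
  exists N0 => n /A_gt0; have := e0 n; rewrite val_e; nia.
- by exists k => //; exists N => n /epos; rewrite val_e subr_gt0.
- exfalso; apply: (@no_slow_growth (op_val r a)
    (fun n => (r (n + size a)%N)%:Z) M L M_gt0 _ A_le) => // [n|].
    by have := incr (n + size a)%N; rewrite -addnA.
  by exists N => n /eneg; rewrite val_e subr_lt0.
Qed.

Lemma op_pos_growth a : op_pos r a ->
  (exists q : rat, 1 < q /\
     exists N, forall n, (N <= n)%N ->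
       q * (op_val r a n)%:~R < (op_val r a n.+1)%:~R) /\
  (exists N, forall n m, (N <= n)%N -> (n < m)%N ->
     op_val r a n < op_val r a m).
Proof.
move=> apos; have [N0 A_gt0] := apos.
have [k k_gt0 [N ratio]] := op_pos_ratio a apos.
split.
  exists ((k + 1)%:~R / k%:~R); split.
    by rewrite ltr_pdivlMr ?ltr0z // mul1r ltr_int ltrDl.
  exists N => n /ratio lt_ratio.
  by rewrite mulrAC ltr_pdivrMr ?ltr0z // -!intrM ltr_int; lia.
exists (maxn N0 N); apply: incr_from => n Nn.
have := A_gt0 n (leq_trans (leq_maxl _ _) Nn).
have := ratio n (leq_trans (leq_maxr _ _) Nn); nia.
Qed.

End SparseGrowth.

Theorem mainTheorem5 (r : nat -> nat) (a : seq int) :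
  strictly_incr r -> sparse r ->
  (op_pos r a ->
     (exists q : rat, 1 < q /\
        exists N, forall n, (N <= n)%N ->
          q * (op_val r a n)%:~R < (op_val r a n.+1)%:~R) /\
     (exists N, forall n m, (N <= n)%N -> (n < m)%N ->
          op_val r a n < op_val r a m)) /\
  (op_neg r a ->
     (exists q : rat, 1 < q /\
        exists N, forall n, (N <= n)%N ->
          (op_val r a n.+1)%:~R < q * (op_val r a n)%:~R) /\
     (exists N, forall n m, (N <= n)%N -> (n < m)%N ->
          op_val r a m < op_val r a n)).
Proof.
move=> r_incr r_sparse; split; first exact: op_pos_growth.
move=> [N aneg].
have oppa_pos : op_pos r (map -%R a).
  by exists N => n /aneg; rewrite op_val_opp oppr_gt0.
have [[q [q_gt1 [N1 ratio]]] [N2 incr]] :=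
  @op_pos_growth r r_incr r_sparse _ oppa_pos.
split.
  exists q; split => //; exists N1 => n /ratio.
  by rewrite !op_val_opp !intrN mulrN ltrN2.
by exists N2 => n m Nn nm; have := incr n m Nn nm; rewrite !op_val_opp ltrN2.
Qed.
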